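(* Let $r=[r_0,\ldots,r_m]$ and $c=[c_0,\ldots,c_n]$ be selections of rows and columns of the Pascal upper triangular matrix $T$, and let $\{\hat r,\hat c\}$ be an ordered sub-pair of $\{r,c\}$ of length $p+1$, with strictly increasing index sequences $\alpha=[\alpha_0,\ldots,\alpha_p]\subseteq\{0,\ldots,m\}$ and $\beta=[\beta_0,\ldots,\beta_p]\subseteq\{0,\ldots,n\}$ such that $\hat r_i=r_{\alpha_i}$ and $\hat c_i=c_{\beta_i}$. Let $I_{\hat r,\hat c}$ be the $(m+1)\times(n+1)$ matrix (rows and columns indexed from $0$) with entry $1$ at positions $(\alpha_i,\beta_i)$ for $i=0,\ldots,p$ and all other entries $0$. Then $\operatorname{rank}(T_{\hat r,\hat c})=\operatorname{rank}(I_{\hat r,\hat c})=p+1$. If moreover $\{\hat r,\hat c\}$ is maximal, then $\operatorname{rank}(T_{r,c})=\operatorname{rank}(I_{\hat r,\hat c})$.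
   Context: The Pascal upper triangular matrix is the infinite matrix $T=(T_{i,j})_{i,j\ge 0}$ with $T_{i,j}=\binom{j}{i}$, where $\binom{j}{i}:=0$ if $i>j$ (rows and columns indexed from $0$). A selection of rows (resp. columns) is a strictly increasing finite sequence of nonnegative integers. For selections $r=[r_0,\ldots,r_m]$ and $c=[c_0,\ldots,c_n]$, $T_{r,c}$ denotes the $(m+1)\times(n+1)$ matrix whose $(i,j)$ entry is $\binom{c_j}{r_i}$. A pair $\{\hat r,\hat c\}$ is an ordered sub-pair of $\{r,c\}$ of length $p+1$ if $\hat r=[\hat r_0,\ldots,\hat r_p]$ is a subsequence of $r$, $\hat c=[\hat c_0,\ldots,\hat c_p]$ is a subsequence of $c$, and $\hat r_i\le \hat c_i$ for all $i=0,\ldots,p$ (the empty pair has length $0$). It is maximal if no ordered sub-pair of $\{r,c\}$ has length greater than $p+1$. *)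

From HB Require Import structures.
From mathcomp Require Import all_boot all_order all_algebra.
Set Implicit Arguments. Unset Strict Implicit. Unset Printing Implicit Defensive.
Import GRing.Theory.

Definition strict_incr_nat (k : nat) (s : 'I_k -> nat) : Prop :=
  forall i j : 'I_k, (i < j)%N -> (s i < s j)%N.

Definition strict_incr_ord (k l : nat) (a : 'I_k -> 'I_l) : Prop :=
  forall i j : 'I_k, (i < j)%N -> (a i < a j)%N.

Definition pascal_sub (a b : nat) (r : 'I_a -> nat) (c : 'I_b -> nat)
  : 'M[rat]_(a, b) :=
  \matrix_(i < a, j < b) (('C(c j, r i))%:R)%R.

Definition ordered_subpair (m n k : nat) (r : 'I_m -> nat) (c : 'I_n -> nat)
  (alpha : 'I_k -> 'I_m) (beta : 'I_k -> 'I_n) : Prop :=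
  strict_incr_ord alpha /\ strict_incr_ord beta /\
  (forall i : 'I_k, (r (alpha i) <= c (beta i))%N).

Definition maximal_subpair (m n k : nat) (r : 'I_m -> nat) (c : 'I_n -> nat)
  (alpha : 'I_k -> 'I_m) (beta : 'I_k -> 'I_n) : Prop :=
  ordered_subpair r c alpha beta /\
  forall (q : nat) (alpha' : 'I_q -> 'I_m) (beta' : 'I_q -> 'I_n),
    ordered_subpair r c alpha' beta' -> (q <= k)%N.

Definition subpair_indicator (m n k : nat)
  (alpha : 'I_k -> 'I_m) (beta : 'I_k -> 'I_n) : 'M[rat]_(m, n) :=
  \matrix_(i < m, j < n)
    (if [exists t : 'I_k, (alpha t == i) && (beta t == j)] then 1%R else 0%R).

From HB Require Import structures.
From mathcomp Require Import all_boot all_order all_algebra perm zify.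
Set Implicit Arguments. Unset Strict Implicit. Unset Printing Implicit Defensive.
Import Order.TTheory GRing.Theory Num.Theory.

(* The square Pascal submatrices [C(b_i, a_j)] with strictly increasing a and
   b have a nonnegative determinant, which is positive when a_i <= b_i for all
   i.  If a_0 = 0, subtracting consecutive rows clears the first column and
   leaves rows that are sums of binomial rows over consecutive disjoint
   intervals; multilinearity expands this into a sum of smaller determinants
   of the same kind.  If a_0 > 0, the identity b C(b-1, a-1) = a C(b, a)
   lowers all indices by one.  Hence T_{rhat,chat} is invertible.  Conversely,
   a nonsingular k x k submatrix of T_{r,c} has a nonzero term in its
   determinant expansion, i.e. k disjoint pairs (r_i, c_j) with r_i <= c_j,
   and sorting both sides of these pairs yields an ordered sub-pair of
   length k. *)

Section SortedPairing.
Variables (d1 d2 : Order.disp_t) (T1 : orderType d1) (T2 : orderType d2).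
Variable R : T1 -> T2 -> bool.
Hypothesis R_anti_mono : forall x x' y y',
  (x' <= x)%O -> (y <= y')%O -> R x y -> R x' y'.

Lemma sort_pairing s (F : 'I_s -> T1) (G : 'I_s -> T2) :
  injective F -> injective G -> (forall i, R (F i) (G i)) ->
  exists (a : 'I_s -> T1) (b : 'I_s -> T2),
    [/\ {homo a : i j / (i < j)%N >-> (i < j)%O},
        {homo b : i j / (i < j)%N >-> (i < j)%O} & forall i, R (a i) (b i)].
Proof.
move=> injF injG RFG.
set X := sort <=%O [seq F i | i <- enum 'I_s].
set Y := sort <=%O [seq G i | i <- enum 'I_s].
have ltX : sorted <%O X by rewrite sort_lt_sorted map_inj_uniq ?enum_uniq.
have ltY : sorted <%O Y by rewrite sort_lt_sorted map_inj_uniq ?enum_uniq.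
have permX : perm_eq X [seq F i | i <- enum 'I_s] by rewrite perm_sort.
have permY : perm_eq Y [seq G i | i <- enum 'I_s] by rewrite perm_sort.
have szX : size X = s by rewrite size_sort size_map size_enum_ord.
have szY : size Y = s by rewrite size_sort size_map size_enum_ord.
exists (fun k => nth (F k) X k), (fun k => nth (G k) Y k); split.
- move=> i j ij; rewrite (set_nth_default (F i)) ?szX //.
  by rewrite lt_sorted_ltn_nth // inE szX.
- move=> i j ij; rewrite (set_nth_default (G i)) ?szY //.
  by rewrite lt_sorted_ltn_nth // inE szY.
move=> k; set x := nth (F k) X k; set y := nth (G k) Y k.
apply/contraT => notRxy; have /negP[] := ltnn k.
(* The k.+1 indices with [G i <= y] would all have [F i < x]; only k do. *)
have <- : count (fun i => G i <= y)%O (enum 'I_s) = k.+1.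
  by rewrite -(count_map G (<= y)%O) -(seq.permP permY) count_le_nth ?szY.
have <- : count (fun i => F i < x)%O (enum 'I_s) = k.
  by rewrite -(count_map F (< x)%O) -(seq.permP permX) count_lt_nth ?szX.
apply: sub_count => i /= Giy; rewrite ltNge; apply: contra notRxy => xFi.
exact: R_anti_mono xFi Giy (RFG i).
Qed.

End SortedPairing.

Lemma strict_incr_ord_inj k l (a : 'I_k -> 'I_l) : strict_incr_ord a -> injective a.
Proof.
move=> incr_a i j eq_aij; apply/val_inj/eqP/contraT.
by rewrite neq_ltn => /orP[] /incr_a; rewrite eq_aij ltnn.
Qed.

Lemma strict_incr_nat_le n (a : 'I_n -> nat) (i j : 'I_n) :
  strict_incr_nat a -> (i <= j)%N -> (a i <= a j)%N.
Proof.
move=> incr_a; rewrite leq_eqVlt => /orP[/eqP/val_inj-> // | /incr_a/ltnW //].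
Qed.

Lemma strict_incr_nat_comp k l (r : 'I_l -> nat) (alpha : 'I_k -> 'I_l) :
  strict_incr_nat r -> strict_incr_ord alpha -> strict_incr_nat (fun i => r (alpha i)).
Proof. by move=> incr_r incr_alpha i j /incr_alpha /incr_r. Qed.

Lemma strict_incr_nat_lift n (a : 'I_n.+1 -> nat) :
  strict_incr_nat a -> strict_incr_nat (fun j => a (lift ord0 j)).
Proof. by move=> incr_a i j lt_ij; apply: incr_a; rewrite /= /bump !add1n. Qed.

Lemma strict_incr_nat_pred n (a : 'I_n -> nat) :
  strict_incr_nat a -> (forall i, 0 < a i)%N -> strict_incr_nat (fun i => (a i).-1).
Proof. by move=> incr_a a_gt0 i j /incr_a; have := a_gt0 i; lia. Qed.

Local Open Scope ring_scope.

Lemma rowsub1_mul_tr (R : nzRingType) m k (f : 'I_k -> 'I_m) : injective f ->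
  rowsub f (1%:M : 'M[R]_m) *m (rowsub f 1%:M)^T = 1%:M.
Proof.
move=> injf; apply/matrixP => s t; rewrite mxE (bigD1 (f s)) //= big1.
  by rewrite !mxE eqxx (inj_eq injf) eq_sym mul1r addr0.
by move=> i ne_i; rewrite !mxE eq_sym (negPf ne_i) mul0r.
Qed.

Lemma mxrank_rowsub_colsub (F : fieldType) m n m' n' (f : 'I_m' -> 'I_m)
    (g : 'I_n' -> 'I_n) (A : 'M[F]_(m, n)) :
  (\rank (rowsub f (colsub g A)) <= \rank A)%N.
Proof.
rewrite rowsubE; apply: leq_trans (mxrankM_maxr _ _) _.
by rewrite -[A in colsub _ A]mulmx1 -mulmx_colsub mxrankM_maxl.
Qed.

Lemma mxrank_nonzero_transversal (F : fieldType) m n (A : 'M[F]_(m, n)) :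
  exists (f : 'I_(\rank A) -> 'I_m) (g : 'I_(\rank A) -> 'I_n),
    [/\ injective f, injective g & forall i, A (f i) (g i) != 0].
Proof.
set B := rowsub (maxrankfun A) A.
have fullBt : row_full B^T by rewrite /row_full mxrank_tr; exact: maxrowsub_free.
set C := rowsub (fullrankfun fullBt) B^T.
have [s nz_s] : exists s : 'S_(\rank A), \prod_i C i (s i) != 0.
  apply/existsP; apply: contraLR (fullrowsub_unit fullBt) => /existsPn zero_C.
  rewrite unitmxE unitfE negbK /determinant big1 // => s _.
  by rewrite (eqP (negPn (zero_C s))) mulr0.
exists (maxrankfun A \o s), (fullrankfun fullBt); split.
- by move=> i j /maxrankfun_inj /perm_inj.
- exact: fullrankfun_inj.
- by move=> i; move/prodf_neq0: nz_s => /(_ i isT); rewrite !mxE.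
Qed.

Lemma subpair_indicatorE m n k (alpha : 'I_k -> 'I_m) (beta : 'I_k -> 'I_n) :
  injective alpha ->
  subpair_indicator alpha beta = (rowsub alpha 1%:M)^T *m rowsub beta 1%:M.
Proof.
move=> inj_alpha; apply/matrixP => i j; rewrite !mxE.
case: existsP => [[t /andP[/eqP<- /eqP<-]] | no_t].
  rewrite (bigD1 t) //= big1 => [|u ne_ut]; first by rewrite !mxE !eqxx mulr1 addr0.
  by rewrite !mxE (inj_eq inj_alpha) (negPf ne_ut) mul0r.
apply/esym/big1 => u _; rewrite !mxE.
have [ai|] := eqVneq (alpha u) i; last by rewrite mul0r.
have [bj|] := eqVneq (beta u) j; last by rewrite mulr0.
by case: no_t; exists u; rewrite ai bj !eqxx.
Qed.

Lemma mxrank_subpair_indicator m n k (alpha : 'I_k -> 'I_m) (beta : 'I_k -> 'I_n) :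
  injective alpha -> injective beta -> \rank (subpair_indicator alpha beta) = k.
Proof.
move=> inj_alpha inj_beta; rewrite subpair_indicatorE //.
apply/eqP; rewrite eqn_leq (leq_trans (mxrankM_maxr _ _) (rank_leq_row _)) /=.
rewrite -[X in (X <= _)%N](mxrank1 rat k) -(rowsub1_mul_tr _ inj_alpha).
rewrite -[X in \rank (_ *m X)]mulmx1 -(rowsub1_mul_tr _ inj_beta) !mulmxA.
by apply: leq_trans (mxrankM_maxl _ _) _; rewrite -!mulmxA mxrankM_maxr.
Qed.

Definition binom_mx n (a b : 'I_n -> nat) : 'M[rat]_n :=
  \matrix_(i, j) 'C(b i, a j)%:R.

Definition binom_sum_mx n (a u w : 'I_n -> nat) : 'M[rat]_n :=
  \matrix_(i, j) \sum_(u i <= t < w i) 'C(t, a j)%:R.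

Definition binom_det_sign n := forall a b : 'I_n -> nat,
  strict_incr_nat a -> strict_incr_nat b ->
  0 <= \det (binom_mx a b) /\
  ((forall i, a i <= b i)%N -> 0 < \det (binom_mx a b)).

Lemma det_binom_sum_mx_split n (a u w : 'I_n -> nat) i0 v :
  (u i0 <= v <= w i0)%N ->
  \det (binom_sum_mx a u w) =
  \det (binom_sum_mx a u [eta w with i0 |-> v]) +
  \det (binom_sum_mx a [eta u with i0 |-> v] w).
Proof.
case/andP=> le_uv le_vw; rewrite -[X in _ = X + _]mul1r -[X in _ = _ + X]mul1r.
apply: (determinant_multilinear (i0 := i0)).
- by apply/rowP => j; rewrite !mxE /= !eqxx !mul1r (big_cat_nat le_uv le_vw).
- by apply/matrixP => i j; rewrite !mxE /= eq_sym (negPf (neq_lift _ _)).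
- by apply/matrixP => i j; rewrite !mxE /= eq_sym (negPf (neq_lift _ _)).
Qed.

Section BinomSums.
Variable n : nat.
Hypothesis binom_mx_sign : binom_det_sign n.

Lemma det_binom_sum_mx_sign (a u w : 'I_n -> nat) :
  strict_incr_nat a -> (forall i, u i < w i)%N ->
  (forall i j : 'I_n, i < j -> w i <= u j)%N ->
  0 <= \det (binom_sum_mx a u w) /\
  ((forall i, a i < w i)%N -> 0 < \det (binom_sum_mx a u w)).
Proof.
move=> incr_a; have [d] := ubnP (\sum_i (w i - u i))%N.
elim: d u w => // d IHd u w; rewrite ltnS => le_sum lt_uw le_wu.
have [unit_len | /forallPn[i0 /eqP ne_wu]] := boolP [forall i, w i == (u i).+1].
  have {}unit_len i : w i = (u i).+1 by apply/eqP/(forallP unit_len).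
  have -> : binom_sum_mx a u w = binom_mx a u.
    by apply/matrixP => i j; rewrite !mxE unit_len big_nat1.
  have incr_u : strict_incr_nat u.
    by move=> i j /le_wu; apply: leq_trans (lt_uw i).
  have [ge0 gt0] := binom_mx_sign incr_a incr_u.
  by split=> // lt_aw; apply: gt0 => i; rewrite -ltnS -unit_len.
have IHd' u' w' : (forall i, u i <= u' i /\ u' i < w' i /\ w' i <= w i)%N ->
    (w' i0 - u' i0 < w i0 - u i0)%N ->
    (forall i, i != i0 -> w' i - u' i = w i - u i)%N ->
    0 <= \det (binom_sum_mx a u' w') /\
    ((forall i, a i < w' i)%N -> 0 < \det (binom_sum_mx a u' w')).
  move=> sub shorter same; apply: IHd => [|i|i j ij].
  - apply: leq_trans le_sum; rewrite (bigD1 i0) //= (eq_bigr _ same).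
    by rewrite [X in (_ < X)%N](bigD1 i0) //= ltn_add2r.
  - by have [_ []] := sub i.
  - by have [_ [_ ?]] := sub i; have [? _] := sub j; have := le_wu i j ij; lia.
have lt_uw0 := lt_uw i0.
have le_uvw : (u i0 <= (w i0).-1 <= w i0)%N by apply/andP; lia.
rewrite (det_binom_sum_mx_split a le_uvw).
set ur := [eta u with i0 |-> _]; set wl := [eta w with i0 |-> _].
have ge0_l : 0 <= \det (binom_sum_mx a u wl).
  apply: (proj1 (IHd' _ _ _ _ _)) => [k|/=|k /negPf /= ->] //=; rewrite ?eqxx.
  - by case: eqP => [->|_]; have := lt_uw k; lia.
  - lia.
have [ge0_r gt0_r] : 0 <= \det (binom_sum_mx a ur w) /\
    ((forall i, a i < w i)%N -> 0 < \det (binom_sum_mx a ur w)).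
  apply: IHd' => [k|/=|k /negPf /= ->] //=; rewrite ?eqxx.
  - by case: eqP => [->|_]; have := lt_uw k; lia.
  - lia.
split; first exact: addr_ge0.
by move=> lt_aw; rewrite ltr_wpDl // gt0_r.
Qed.

End BinomSums.

Lemma binom_sum_nat (R : pzRingType) (x y k : nat) : (x <= y)%N ->
  \sum_(x <= t < y) 'C(t, k)%:R = 'C(y, k.+1)%:R - 'C(x, k.+1)%:R :> R.
Proof.
move=> /subnKC <-; elim: (y - x)%N => [|d IHd]; first by rewrite addn0 big_geq // subrr.
by rewrite addnS big_nat_recr ?leq_addr //= IHd binS natrD addrAC.
Qed.

Lemma det_binom_mx_pred n (a b : 'I_n -> nat) : (forall j, 0 < a j)%N ->
  \det (binom_mx a b) = \prod_i (b i)%:R *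
    \det (binom_mx (fun j => (a j).-1) (fun i => (b i).-1)) / \prod_j (a j)%:R.
Proof.
move=> a_gt0.
have -> : binom_mx a b = diag_mx (\row_i (b i)%:R) *m
    binom_mx (fun j => (a j).-1) (fun i => (b i).-1) *m diag_mx (\row_j (a j)%:R^-1).
  apply/matrixP => i j; rewrite mul_mx_diag mul_diag_mx !mxE.
  have nz_a : (a j)%:R != 0 :> rat by rewrite pnatr_eq0 -lt0n.
  by apply: (mulIf nz_a); rewrite divfK // -!natrM mul_bin_diag prednK // mulnC.
rewrite !det_mulmx !det_diag -prodfV.
by congr (_ * _ * _); apply: eq_bigr => i _; rewrite mxE.
Qed.

Section FirstDifference.
Variables (R : comNzRingType) (n : nat).

Definition first_diff_mx : 'M[R]_n.+1 := 1%:M - \matrix_(i, j) (i == j.+1 :> nat)%:R.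

Lemma det_first_diff_mx : \det first_diff_mx = 1.
Proof.
rewrite /first_diff_mx det_trig; last first.
  apply/is_trig_mxP => i j lt_ij; rewrite !mxE -val_eqE (ltn_eqF lt_ij).
  by rewrite (_ : (i == j.+1 :> nat) = false) ?subr0 //; lia.
by rewrite big1 // => i _; rewrite !mxE eqxx (_ : (i == i.+1 :> nat) = false) ?subr0 //; lia.
Qed.

Lemma first_diff_mx_row0 m (X : 'M[R]_(n.+1, m)) j :
  (first_diff_mx *m X) ord0 j = X ord0 j.
Proof.
by rewrite /first_diff_mx mulmxBl mul1mx !mxE big1 ?subr0 // => k _; rewrite !mxE mul0r.
Qed.

Lemma first_diff_mx_lift m (X : 'M[R]_(n.+1, m)) i j :
  (first_diff_mx *m X) (lift ord0 i) j =
  X (lift ord0 i) j - X (widen_ord (leqnSn n) i) j.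
Proof.
rewrite /first_diff_mx mulmxBl mul1mx !mxE (bigD1 (widen_ord (leqnSn n) i)) //= !mxE.
rewrite lift0 eqxx mul1r big1 ?addr0 // => k ne_ki; rewrite !mxE lift0 eqSS.
rewrite (_ : (i == k :> nat) = false) ?mul0r //.
by apply: contraNF ne_ki => /eqP eq_ik; apply/eqP/val_inj.
Qed.
End FirstDifference.

Lemma det_binom_mx_bin0 n (a b : 'I_n.+1 -> nat) :
  a ord0 = 0%N -> strict_incr_nat a -> strict_incr_nat b ->
  \det (binom_mx a b) = \det (binom_sum_mx (fun j => (a (lift ord0 j)).-1)
    (fun i => b (widen_ord (leqnSn n) i)) (fun i => b (lift ord0 i))).
Proof.
move=> a0 incr_a incr_b; rewrite -[LHS]mul1r -(det_first_diff_mx rat n) -det_mulmx.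
rewrite (expand_det_col _ ord0) big_ord_recl big1 => [|i _]; last first.
  by rewrite first_diff_mx_lift !mxE a0 !bin0 subrr mul0r.
rewrite addr0 first_diff_mx_row0 !mxE a0 bin0 mul1r /cofactor /= expr0 mul1r.
congr (\det _); apply/matrixP => i j; rewrite 2!mxE first_diff_mx_lift !mxE.
have a_gt0 : (0 < a (lift ord0 j))%N by rewrite -a0 incr_a.
rewrite binom_sum_nat ?prednK //; apply: strict_incr_nat_le incr_b _.
by rewrite /= /bump add1n.
Qed.

Lemma binom_det_sign_succ n : binom_det_sign n -> binom_det_sign n.+1.
Proof.
move=> sign_n a b; move: {2}(a ord0) (erefl (a ord0)) => k.
elim: k a b => [|k IHk] a b a0 incr_a incr_b.
  have a_gt0 j : (0 < a (lift ord0 j))%N by rewrite -a0 incr_a.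
  have lt_b i : (b (widen_ord (leqnSn n) i) < b (lift ord0 i))%N.
    by apply: incr_b; rewrite /= /bump add1n.
  have le_b (i j : 'I_n) : (i < j)%N -> (b (lift ord0 i) <= b (widen_ord (leqnSn n) j))%N.
    by move=> lt_ij; apply: strict_incr_nat_le incr_b _; rewrite /= /bump add1n.
  have incr_a' := strict_incr_nat_pred (strict_incr_nat_lift incr_a) a_gt0.
  rewrite det_binom_mx_bin0 //.
  have [ge0 gt0] := det_binom_sum_mx_sign sign_n incr_a' lt_b le_b.
  by split=> // le_ab; apply: gt0 => i; have := le_ab (lift ord0 i); have := a_gt0 i; lia.
have a_gt0 j : (0 < a j)%N.
  by apply: leq_trans (strict_incr_nat_le (i := ord0) incr_a (leq0n j)); rewrite a0.
rewrite det_binom_mx_pred //.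
have [b0|b_gt0] := posnP (b ord0).
  rewrite (bigD1 ord0) //= b0 !mul0r; split=> // /(_ ord0).
  by rewrite a0 b0.
have {}b_gt0 i : (0 < b i)%N.
  exact: leq_trans b_gt0 (strict_incr_nat_le (i := ord0) incr_b (leq0n i)).
have [ge0 gt0] := IHk _ _ (congr1 predn a0) (strict_incr_nat_pred incr_a a_gt0)
  (strict_incr_nat_pred incr_b b_gt0).
split; first by rewrite divr_ge0 ?mulr_ge0 ?prodr_ge0.
move=> le_ab; rewrite divr_gt0 ?mulr_gt0 ?prodr_gt0 //= ?gt0 // => i.
- by move=> _; rewrite ltr0n.
- by have := le_ab i; lia.
- by move=> _; rewrite ltr0n.
Qed.

Lemma binom_det_sign_all n : binom_det_sign n.
Proof.
elim: n => [|n]; last exact: binom_det_sign_succ.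
by move=> a b _ _; rewrite det_mx00; split=> // _; exact: ltr01.
Qed.

Lemma det_pascal_sub_gt0 n (a b : 'I_n -> nat) :
  strict_incr_nat a -> strict_incr_nat b -> (forall i, a i <= b i)%N ->
  0 < \det (pascal_sub a b).
Proof.
move=> incr_a incr_b; have -> : pascal_sub a b = (binom_mx a b)^T.
  by apply/matrixP => i j; rewrite !mxE.
by rewrite det_tr; apply: (binom_det_sign_all incr_a incr_b).2.
Qed.

Lemma mxrank_pascal_sub_square n (a b : 'I_n -> nat) :
  strict_incr_nat a -> strict_incr_nat b -> (forall i, a i <= b i)%N ->
  \rank (pascal_sub a b) = n.
Proof.
move=> incr_a incr_b le_ab; apply: mxrank_unit.
by rewrite unitmxE unitfE lt0r_neq0 // det_pascal_sub_gt0.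
Qed.

Lemma pascal_sub_comp m n k l (r : 'I_m -> nat) (c : 'I_n -> nat)
    (alpha : 'I_k -> 'I_m) (beta : 'I_l -> 'I_n) :
  pascal_sub (fun i => r (alpha i)) (fun j => c (beta j)) =
  rowsub alpha (colsub beta (pascal_sub r c)).
Proof. by apply/matrixP => i j; rewrite !mxE. Qed.

Lemma exists_subpair_mxrank m n (r : 'I_m.+1 -> nat) (c : 'I_n.+1 -> nat) :
  strict_incr_nat r -> strict_incr_nat c ->
  exists (alpha : 'I_(\rank (pascal_sub r c)) -> 'I_m.+1) beta,
    ordered_subpair r c alpha beta.
Proof.
move=> incr_r incr_c.
have [f [g [inj_f inj_g nz_fg]]] := mxrank_nonzero_transversal (pascal_sub r c).
have le_fg i : (r (f i) <= c (g i))%N.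
  by have := nz_fg i; rewrite mxE pnatr_eq0 -lt0n bin_gt0.
have le_rc_mono x x' y y' : (x' <= x)%O -> (y <= y')%O ->
    (r x <= c y)%N -> (r x' <= c y')%N.
  move=> le_x le_y le_xy; apply: leq_trans (strict_incr_nat_le incr_c le_y).
  exact: leq_trans (strict_incr_nat_le incr_r le_x) le_xy.
have [alpha [beta [incr_alpha incr_beta le_ab]]] :=
  sort_pairing le_rc_mono inj_f inj_g le_fg.
by exists alpha, beta.
Qed.

Theorem corollary1 (m n p : nat) (r : 'I_m.+1 -> nat) (c : 'I_n.+1 -> nat)
  (alpha : 'I_p.+1 -> 'I_m.+1) (beta : 'I_p.+1 -> 'I_n.+1) :
  strict_incr_nat r -> strict_incr_nat c ->
  ordered_subpair r c alpha beta ->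
  (\rank (pascal_sub (fun i => r (alpha i)) (fun j => c (beta j)))
     = \rank (subpair_indicator alpha beta)
   /\ \rank (subpair_indicator alpha beta) = p.+1)
  /\ (maximal_subpair r c alpha beta ->
      \rank (pascal_sub r c) = \rank (subpair_indicator alpha beta)).
Proof.
move=> incr_r incr_c [incr_alpha [incr_beta le_rc]].
have rank_I : \rank (subpair_indicator alpha beta) = p.+1.
  by apply: mxrank_subpair_indicator; apply: strict_incr_ord_inj.
have rank_sub := mxrank_pascal_sub_square (strict_incr_nat_comp incr_r incr_alpha)
  (strict_incr_nat_comp incr_c incr_beta) le_rc.
split; first by rewrite rank_sub rank_I.
case=> _ maximal; rewrite rank_I; apply/eqP; rewrite eqn_leq.
have [alpha' [beta' /maximal ->]] := exists_subpair_mxrank incr_r incr_c.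
by rewrite -rank_sub pascal_sub_comp mxrank_rowsub_colsub.
Qed.
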